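(* Suppose $\lambda+3\lambda C<1$ and there is a constant $M>0$ such that $a_i\le CM$ for all $i\ge1$. Then for every $k\ge 1$, $$\sum_{m=1}^k E_m^k\le M\,\frac{1-\lambda-2\lambda C}{1-\lambda-3\lambda C}.$$
   Context: Let $C>0$ and $0<\lambda<1$ be constants and let $(a_k)_{k\ge 1}$ be a sequence of nonnegative real numbers. Define the doubly indexed array $(E_m^k)_{m\ge 1,\,k\ge 0}$ by $E_m^0=0$ for all $m\ge1$ and, for $k\ge 1$, $$E_1^k=\lambda\big(E_1^{k-1}+2C\,E_1^{k-1}+a_k\big),\qquad E_m^k=\lambda\big(E_m^{k-1}+C\,(E_m^{k-1}+E_{m-1}^{k-1})\big)\ \ (m\ge 2).$$ (Consequently $E_m^k=0$ whenever $m>k$, and $E_1^1=\lambda a_1$.) In the paper, $C$ is the constant of the evolution requirement of the numerical scheme, $\lambda$ the constant of the mesh $\lambda$-rule, and $E_m^k$ the bound on the $m$-th oscillation extreme after $k$ steps. *)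

From Stdlib Require Import Reals Lra.
Open Scope R_scope.

(* E C lam a m k  =  E_m^k  from the paper (indices m >= 1, k >= 0).
   The sequence a is indexed so that a k is a_k for k >= 1 (a 0 unused).
   The value at m = 0 is a dummy (set to 0) and never used for m >= 1. *)
Fixpoint E (C lam : R) (a : nat -> R) (m k : nat) {struct k} : R :=
  match k with
  | O => 0
  | S k' =>
    match m with
    | O => 0
    | S O => lam * (E C lam a 1 k' + 2 * C * E C lam a 1 k' + a (S k'))
    | S m' => lam * (E C lam a m k' + C * (E C lam a m k' + E C lam a m' k'))
    end
  end.

Fixpoint sumE (C lam : R) (a : nat -> R) (n k : nat) : R :=
  match n with
  | O => 0
  | S n' => sumE C lam a n' k + E C lam a n k
  end.

(* Summing the defining recurrences over m = 1..k+1 (the entries E_m^k with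
   m > k vanish) gives the exact identity
     S_{k+1} = lam * ((1 + 2C) S_k + C E_1^k + a_{k+1}),
   and since every E_m^k is nonnegative, E_1^k <= S_k; hence
     S_{k+1} <= lam (1 + 3C) S_k + lam a_{k+1} <= lam (1 + 3C) S_k + lam C M.
   A linear recurrence s_{k+1} <= q s_k + c with s_0 <= B and q B + c <= B
   stays below B, so with q = lam (1 + 3C) < 1 and the fixed point
   B = lam C M / (1 - lam - 3 lam C) every S_k is bounded by B, which is at
   most M (1 - lam - 2 lam C) / (1 - lam - 3 lam C) because lam C <= 1 - lam - 2 lam C. *)
From Stdlib Require Import Reals Lra Lia Psatz.
Open Scope R_scope.

Lemma affine_recurrence_bound (s : nat -> R) (q c B : R) :
  0 <= q -> s 0%nat <= B -> q * B + c <= B ->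
  (forall k, s (S k) <= q * s k + c) ->
  forall k, s k <= B.
Proof.
  intros hq h0 hfix hstep k.
  induction k as [|k IH]; [exact h0|].
  apply Rle_trans with (q * s k + c); [apply hstep|].
  apply Rle_trans with (q * B + c); [|exact hfix].
  apply Rplus_le_compat_r, Rmult_le_compat_l; assumption.
Qed.

Lemma E_above_diagonal (C lam : R) (a : nat -> R) :
  forall k m, (k < m)%nat -> E C lam a m k = 0.
Proof.
  induction k as [|k IH]; intros m hkm; simpl; [reflexivity|].
  destruct m as [|[|m]]; [lia|lia|].
  rewrite (IH (S (S m))), (IH (S m)) by lia. ring.
Qed.

Lemma sumE_past_diagonal (C lam : R) (a : nat -> R) (k : nat) :
  sumE C lam a (S k) k = sumE C lam a k k.
Proof.
  simpl. rewrite E_above_diagonal by lia. ring.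
Qed.

(* Summing the defining recurrences over m = 1..n+1: each E_m^{k+1} takes
   (1 + C) E_m^k from its own row and C E_{m-1}^k from the row below, and the
   first row receives the extra C E_1^k and the input a_{k+1}. *)
Lemma sumE_step (C lam : R) (a : nat -> R) (n k : nat) :
  sumE C lam a (S n) (S k) =
  lam * ((1 + C) * sumE C lam a (S n) k + C * E C lam a 1 k
         + C * sumE C lam a n k + a (S k)).
Proof.
  induction n as [|n IH]; [simpl; ring|].
  change (sumE C lam a (S (S n)) (S k))
    with (sumE C lam a (S n) (S k) + E C lam a (S (S n)) (S k)).
  rewrite IH.
  change (E C lam a (S (S n)) (S k)) with
    (lam * (E C lam a (S (S n)) k + C * (E C lam a (S (S n)) k + E C lam a (S n) k))).
  change (sumE C lam a (S (S n)) k) with (sumE C lam a (S n) k + E C lam a (S (S n)) k).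
  change (sumE C lam a (S n) k) with (sumE C lam a n k + E C lam a (S n) k).
  ring.
Qed.

Section Oscillation.
Variables (C lam : R) (a : nat -> R).
Hypotheses (hC : 0 <= C) (hlam : 0 <= lam)
  (ha0 : forall i, (1 <= i)%nat -> 0 <= a i).

Lemma E_nonneg : forall k m, 0 <= E C lam a m k.
Proof.
  induction k as [|k IH]; intros m; simpl; [lra|].
  destruct m as [|[|m]]; [lra| |].
  - assert (0 <= a (S k)) by (apply ha0; lia).
    pose proof (IH 1%nat).
    apply Rmult_le_pos; [lra|]. nra.
  - pose proof (IH (S (S m))). pose proof (IH (S m)).
    apply Rmult_le_pos; [lra|]. nra.
Qed.

Lemma sumE_nonneg : forall n k, 0 <= sumE C lam a n k.
Proof.
  induction n as [|n IH]; intros k; simpl; [lra|].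
  pose proof (E_nonneg k (S n)). pose proof (IH k). lra.
Qed.

Lemma E1_le_sumE : forall n k, (1 <= n)%nat -> E C lam a 1 k <= sumE C lam a n k.
Proof.
  intros n k hn. induction n as [|n IH]; [lia|].
  destruct n as [|n]; simpl; [lra|].
  pose proof (E_nonneg k (S (S n))). simpl in IH. specialize (IH ltac:(lia)). lra.
Qed.

Lemma total_mass_step : forall k,
  sumE C lam a (S k) (S k) <= lam * (1 + 3 * C) * sumE C lam a k k + lam * a (S k).
Proof.
  intros k.
  rewrite sumE_step, sumE_past_diagonal.
  assert (hE1 : E C lam a 1 k <= sumE C lam a k k).
  { destruct k as [|k]; [simpl; lra|]. apply E1_le_sumE; lia. }
  pose proof (sumE_nonneg k k).
  assert (C * E C lam a 1 k <= C * sumE C lam a k k)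
    by (apply Rmult_le_compat_l; assumption).
  assert (0 <= C * sumE C lam a k k) by (apply Rmult_le_pos; assumption).
  assert (hinner : (1 + C) * sumE C lam a k k + C * E C lam a 1 k
                   + C * sumE C lam a k k + a (S k)
                   <= (1 + 3 * C) * sumE C lam a k k + a (S k)) by lra.
  apply Rmult_le_compat_l with (r := lam) in hinner; [lra | exact hlam].
Qed.
End Oscillation.

Theorem mainTheorem6 (C lam M : R) (a : nat -> R)
  (hC : 0 < C) (hlam0 : 0 < lam) (hlam1 : lam < 1)
  (ha0 : forall i, (1 <= i)%nat -> 0 <= a i)
  (hcond : lam + 3 * lam * C < 1)
  (hM : 0 < M) (haM : forall i, (1 <= i)%nat -> a i <= C * M) :
  forall k : nat, (1 <= k)%nat ->
    sumE C lam a k k <= M * ((1 - lam - 2 * lam * C) / (1 - lam - 3 * lam * C)).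
Proof.
  intros k _.
  set (d := 1 - lam - 3 * lam * C).
  assert (hd : 0 < d) by (unfold d; lra).
  set (B := lam * C * M / d).
  assert (hfix : lam * (1 + 3 * C) * B + lam * C * M = B)
    by (unfold B, d in *; field; lra).
  assert (hbound : forall j, sumE C lam a j j <= B).
  { apply (affine_recurrence_bound (fun j => sumE C lam a j j)
             (lam * (1 + 3 * C)) (lam * C * M)); cbv beta.
    - nra.
    - change (0 <= B).
      assert (0 <= lam * C * M) by (apply Rmult_le_pos; [nra | lra]).
      unfold B, Rdiv. apply Rmult_le_pos; [assumption|].
      left; apply Rinv_0_lt_compat; exact hd.
    - lra.
    - intros j.
      pose proof (total_mass_step C lam a ltac:(lra) ltac:(lra) ha0 j).
      assert (lam * a (S j) <= lam * C * M)
        by (rewrite Rmult_assoc; apply Rmult_le_compat_l; [lra | apply haM; lia]).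
      lra. }
  apply Rle_trans with B; [apply hbound|].
  (* lam C <= 1 - lam - 2 lam C is exactly the hypothesis hcond. *)
  unfold B, Rdiv. rewrite <- Rmult_assoc, (Rmult_comm M).
  apply Rmult_le_compat_r; [left; apply Rinv_0_lt_compat; exact hd|]. nra.
Qed.
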